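(* Let $\mathsf{T}$ be a rooted plane tree and $\delta\in\mathcal{O}(\mathsf{T})$. (i) For every $v\in\mathsf{T}$ and every $u\in M_\delta(v)$, the ornamentation $\delta_u^v$ is covered by $\delta$ in $\mathcal{O}(\mathsf{T})$. (ii) For every ornamentation $\delta'$ covered by $\delta$ in $\mathcal{O}(\mathsf{T})$, there exist $v\in\mathsf{T}$ and $u\in M_\delta(v)$ such that $\delta'=\delta_u^v$. (iii) For all $v\in\mathsf{T}$, $\mathsf{Pop}(\delta)(v)=\bigcap_{u\in M_\delta(v)}\delta_u^v(v)$ (where the empty intersection is interpreted as $\delta(v)$).
   Context: A rooted plane tree $\mathsf{T}$ is a finite tree with a distinguished root, regarded as a poset $\leq_\mathsf{T}$ in which $v'\leq_\mathsf{T} v$ iff $v$ lies on the path from $v'$ to the root. An ornament is a nonempty set of nodes inducing a connected subgraph. For a set $S$ of nodes and $u\in S$, $\Delta_S(u)=\{w\in S:w\leq_\mathsf{T} u\}$. An ornamentation is a map $\delta$ from $\mathsf{T}$ to ornaments such that the unique maximal element of $\delta(v)$ is $v$ and any two sets $\delta(v),\delta(v')$ are nested or disjoint. $\mathcal{O}(\mathsf{T})$ is the set of ornamentations ordered by $\delta\leq\delta'$ iff $\delta(v)\subseteq\delta'(v)$ for all $v$; it is a lattice with meet given by pointwise intersection. $\mathsf{Pop}(\delta)=\bigwedge(\{\delta\}\cup\{\delta':\delta'\lessdot\delta\})$. For distinct nodes $u,v$, $v$ wraps $u$ in $\delta$ if $\delta(u)\subseteq\delta(v)$ and there is no node $w$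 with $\delta(u)\subsetneq\delta(w)\subsetneq\delta(v)$. When $v$ wraps $u$, the reduction of $\delta(v)$ by $u$ is $\delta(v)\setminus\Delta_{\delta(v)}(u)$, and $\delta_u^v$ is the ornamentation with $\delta_u^v(v)=\delta(v)\setminus\Delta_{\delta(v)}(u)$ and $\delta_u^v(w)=\delta(w)$ for $w\neq v$. A minimal reduction of $\delta(v)$ is a reduction of $\delta(v)$ (by some node wrapped by $v$) that is not properly contained in any other reduction of $\delta(v)$. $M_\delta(v)$ is the set of nodes $u\in\delta(v)$ wrapped by $v$ such that $\delta(v)\setminus\Delta_{\delta(v)}(u)$ is a minimal reduction of $\delta(v)$. *)

From mathcomp Require Import all_boot.
Set Implicit Arguments. Unset Strict Implicit. Unset Printing Implicit Defensive.

Section Ornaments.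
Variable V : finType.
Variable root : V.
Variable par : V -> V.

Definition rooted_tree : Prop :=
  par root = root /\ forall v : V, exists k, iter k par v = root.

(* v' <=_T v iff v lies on the path from v' to the root *)
Definition leT (v' v : V) : bool := connect (frel par) v' v.

Definition adjT (x y : V) : bool :=
  ((x != root) && (par x == y)) || ((y != root) && (par y == x)).

Definition ornament (S : {set V}) : bool :=
  (S != set0) &&
  [forall x in S, forall y in S,
     connect [rel a b | [&& a \in S, b \in S & adjT a b]] x y].

Definition maximal_in (S : {set V}) (m : V) : bool :=
  (m \in S) && [forall w in S, leT m w ==> (w == m)].

Definition ornamentation (d : {ffun V -> {set V}}) : bool :=
  [forall v, ornament (d v)] &&
  [forall v, maximal_in (d v) v && [forall m, maximal_in (d v) m ==> (m == v)]] &&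
  [forall v, forall v', [|| d v \subset d v', d v' \subset d v
                          | [disjoint d v & d v']]].

Definition orn_le (d d' : {ffun V -> {set V}}) : bool :=
  [forall v, d v \subset d' v].

Definition orn_lt (d d' : {ffun V -> {set V}}) : bool :=
  orn_le d d' && (d != d').

Definition covby (d' d : {ffun V -> {set V}}) : bool :=
  [&& ornamentation d', ornamentation d, orn_lt d' d &
      [forall e : {ffun V -> {set V}},
         ornamentation e ==> ~~ (orn_lt d' e && orn_lt e d)]].

(* Pop(d) = meet of d and its lower covers; meet in O(T) is pointwise
   intersection *)
Definition Pop (d : {ffun V -> {set V}}) (v : V) : {set V} :=
  d v :&: \bigcap_(d' : {ffun V -> {set V}} | covby d' d) d' v.

Definition wraps (d : {ffun V -> {set V}}) (v u : V) : bool :=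
  [&& u != v, d u \subset d v &
      [forall w, ~~ ((d u \proper d w) && (d w \proper d v))]].

Definition Delta (S : {set V}) (u : V) : {set V} := [set w in S | leT w u].

Definition reduction (d : {ffun V -> {set V}}) (v u : V) : {set V} :=
  d v :\: Delta (d v) u.

Definition orn_red (d : {ffun V -> {set V}}) (u v : V) : {ffun V -> {set V}} :=
  [ffun w => if w == v then reduction d v u else d w].

Definition minimal_reduction (d : {ffun V -> {set V}}) (v : V) (R : {set V}) : bool :=
  [exists u, wraps d v u && (R == reduction d v u)] &&
  [forall u', wraps d v u' ==> ~~ (R \proper reduction d v u')].

Definition Mset (d : {ffun V -> {set V}}) (v : V) : {set V} :=
  [set u in d v | wraps d v u && minimal_reduction d v (reduction d v u)].

End Ornaments.

From mathcomp Require Import all_boot.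
Set Implicit Arguments. Unset Strict Implicit. Unset Printing Implicit Defensive.

(* In a tree an ornament with top v is the same as a set below v that is convex
   along the paths up to v, so an ornamentation is a laminar family of such sets.
   Removing from d v the down-set of a node u wrapped by v keeps the family
   laminar, which gives an ornamentation below d.  Conversely, if e < d and v is
   a node of smallest d v with e v <> d v, then e agrees with d on every node
   wrapped by v, and laminarity against those forces e v inside the reduction of
   d v by some wrapped node, hence inside a minimal one.  Both halves together
   identify the lower covers of d, and Pop is their pointwise intersection. *)

Lemma disjointP (T : finType) (A B : {set T}) :
  reflect (forall x, x \in A -> x \notin B) [disjoint A & B].
Proof.
rewrite disjoints_subset; apply: (iffP subsetP) => h x xA; last by rewrite inE h.
by have := h x xA; rewrite inE.
Qed.

Lemma ffun_eq_off (T : finType) (R : Type) (f g : {ffun T -> R}) v :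
  (forall w, w != v -> f w = g w) -> f v = g v -> f = g.
Proof. by move=> off fv; apply/ffunP => w; case: (eqVneq w v) => [->|]; last exact: off. Qed.

Lemma orn_le_eq_off (T : finType) (d1 e d2 : {ffun T -> {set T}}) v :
  orn_le d1 e -> orn_le e d2 -> (forall w, w != v -> d1 w = d2 w) ->
  forall w, w != v -> e w = d2 w.
Proof.
move=> /forallP le1 /forallP le2 off w nwv; apply/eqP.
by rewrite eqEsubset (le2 w) -off // (le1 w).
Qed.

Section TreeOrder.
Variables (V : finType) (root : V) (par : V -> V).
Hypothesis hT : rooted_tree root par.
Local Notation le := (leT par).

Lemma leTxx x : le x x.
Proof. exact: connect0. Qed.

Lemma leT_trans y x z : le x y -> le y z -> le x z.
Proof. exact: connect_trans. Qed.

Lemma leT_par x : le x (par x).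
Proof. exact: fconnect1. Qed.

Lemma leT_iter k x : le x (iter k par x).
Proof. exact: fconnect_iter. Qed.

Lemma leT_iterP x y : le x y -> exists k, iter k par x = y.
Proof. by move=> /iter_findex h; exists (findex par x y). Qed.

Lemma iter_par_root k : iter k par root = root.
Proof. by case: hT => hr _; elim: k => //= k ->. Qed.

(* A cycle of [par] through x forces x to be the root, whose cycle is trivial. *)
Lemma leT_anti x y : le x y -> le y x -> x = y.
Proof.
move=> /leT_iterP [i hi] /leT_iterP [j hj].
have cyc n : iter (n * (j + i)) par x = x.
  by elim: n => //= n IH; rewrite mulSn iterD IH iterD hi hj.
case: (posnP (j + i)) => [|pos_ji].
  by move/eqP; rewrite addn_eq0 => /andP [_ /eqP i0]; rewrite -hi i0.
have [k hk] := hT.2 x.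
have le_k : k <= k * (j + i) by rewrite leq_pmulr.
have xr : x = root by rewrite -(cyc k) -(subnK le_k) iterD hk iter_par_root.
by rewrite -hi xr iter_par_root.
Qed.

Lemma leT_total x a b : le x a -> le x b -> le a b || le b a.
Proof.
move=> /leT_iterP [i <-] /leT_iterP [j <-].
case: (leqP i j) => hij; first by rewrite -(subnK hij) iterD leT_iter.
by rewrite -(subnK (ltnW hij)) iterD leT_iter orbT.
Qed.

Lemma adjT_sym : symmetric (adjT root par).
Proof. by move=> a b; rewrite /adjT orbC. Qed.

Lemma adjT_leaving_down_set a b y : adjT root par a b -> le a y -> ~~ le b y -> a = y.
Proof.
case/orP => /andP [_ /eqP hp] hay hby.
  move: hay; rewrite /leT fconnect_eqVf hp => /orP [/eqP //| h].
  by move: hby; rewrite /leT h.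
by move: hby; rewrite (leT_trans _ hay) //= -hp leT_par.
Qed.

End TreeOrder.

Section OrnamentAt.
Variables (V : finType) (root : V) (par : V -> V).
Hypothesis hT : rooted_tree root par.
Local Notation le := (leT par).

Definition ornament_at (S : {set V}) v := [/\ v \in S, forall x, x \in S -> le x v
  & forall x y, x \in S -> le x y -> le y v -> y \in S].

Definition induced_adj (S : {set V}) := [rel a b | [&& a \in S, b \in S & adjT root par a b]].

Lemma le_unique_maximal S v x :
  (forall m, maximal_in par S m -> m = v) -> x \in S -> le x v.
Proof.
move=> uniq_max xS.
(* The element of S above x with the fewest ancestors is maximal in S. *)
pose up y := [set z | le y z].
pose A := [set y in S | le x y].
have xA : x \in A by rewrite inE xS leTxx.
case: (arg_minnP (fun y => #|up y|) xA) => y yA ymin.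
have /andP [yS xy] : (y \in S) && le x y by have : y \in A by []; rewrite inE.
rewrite -(uniq_max y) //; apply/andP; split => //.
apply/forallP => w; apply/implyP => wS; apply/implyP => yw; apply/eqP.
have wA : w \in A by rewrite inE wS (leT_trans xy).
have wy : le w y.
  apply: contraTT (ymin w wA) => nwy.
  rewrite -ltnNge; apply/proper_card/properP; split.
    by apply/subsetP => z; rewrite !inE; apply: leT_trans.
  by exists y; rewrite !inE ?leTxx.
exact: (leT_anti hT wy yw).
Qed.

Lemma induced_path_leaves S y p a : path (induced_adj S) a p -> a \in S -> le a y ->
  ~~ le (last a p) y -> y \in S.
Proof.
elim: p a => [|b p IH] a /=; first by move=> _ _ ->.
move=> /andP [/and3P [aS bS ab] hp] _ hay hl.
case hby: (le b y); first exact: IH hp bS hby hl.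
by rewrite -(adjT_leaving_down_set ab hay (negbT hby)).
Qed.

Lemma ornament_at_of_ornament S v : ornament root par S -> maximal_in par S v ->
  (forall m, maximal_in par S m -> m = v) -> ornament_at S v.
Proof.
case/andP => _ /forallP conn /andP [vS _] uniq_max.
have le_v x : x \in S -> le x v by apply: le_unique_maximal.
split => // x y xS xy yv.
case: (eqVneq y v) => [-> //| nyv].
have := conn x; rewrite xS => /forallP /(_ v); rewrite vS => /connectP [p hp hl].
apply: (induced_path_leaves hp xS xy); rewrite -hl.
by apply: contra nyv => vy; rewrite (leT_anti hT yv vy).
Qed.

Lemma ornament_at_connect S v x : ornament_at S v -> x \in S ->
  connect (induced_adj S) x v.
Proof.
case=> vS le_v conv xS; have [k hk] := leT_iterP (le_v x xS).
elim: k x xS hk => [|k IH] x xS hk; first by rewrite -hk connect0.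
case: (eqVneq x v) => [-> |nxv]; first exact: connect0.
rewrite iterSr in hk.
have pxS : par x \in S by rewrite (conv x) ?leT_par // -hk leT_iter.
apply: connect_trans (IH _ pxS hk); apply: connect1.
rewrite /= xS pxS /adjT eqxx andbT; apply/orP; left; apply: contra nxv => /eqP xr.
by rewrite -hk xr -iterSr iter_par_root.
Qed.

Lemma ornament_of_ornament_at S v : ornament_at S v ->
  [/\ ornament root par S, maximal_in par S v & forall m, maximal_in par S m -> m = v].
Proof.
move=> Sv; case: (Sv) => vS le_v _.
have conn_sym : connect_sym (induced_adj S).
  by apply: sym_connect_sym => a b /=; rewrite adjT_sym andbCA.
split.
- rewrite /ornament; apply/andP; split; first by apply/set0Pn; exists v.
  apply/forallP => x; apply/implyP => xS; apply/forallP => y; apply/implyP => yS.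
  by rewrite (connect_trans (ornament_at_connect Sv xS)) // conn_sym ornament_at_connect.
- rewrite /maximal_in vS; apply/forallP => w; apply/implyP => wS; apply/implyP => vw.
  by apply/eqP; apply: (leT_anti hT) => //; apply: le_v.
- move=> m /andP [mS /forallP /(_ v)]; rewrite vS /= => /implyP /(_ (le_v m mS)).
  by move/eqP.
Qed.

End OrnamentAt.

Section Ornamentations.
Variables (V : finType) (root : V) (par : V -> V).
Hypothesis hT : rooted_tree root par.
Local Notation le := (leT par).

Definition nested_or_disjoint (A B : {set V}) :=
  [|| A \subset B, B \subset A | [disjoint A & B]].

Lemma nested_or_disjointC A B : nested_or_disjoint A B = nested_or_disjoint B A.
Proof. by rewrite /nested_or_disjoint disjoint_sym orbA (orbC (A \subset B)) -orbA. Qed.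

Definition tree_ornamentation (d : {ffun V -> {set V}}) :=
  (forall v, ornament_at par (d v) v) /\ (forall v w, nested_or_disjoint (d v) (d w)).

Lemma ornamentationP d : ornamentation root par d <-> tree_ornamentation d.
Proof.
split.
  case/andP => /andP [/forallP orn /forallP top] /forallP nest; split => [v|v w].
    have /andP [max_v /forallP uniq_max] := top v.
    by apply: (ornament_at_of_ornament hT (orn v) max_v) => m /(implyP (uniq_max m)) /eqP.
  exact: (forallP (nest v) w).
case=> top nest; apply/andP; split; first (apply/andP; split).
- by apply/forallP => v; case: (ornament_of_ornament_at hT (top v)).
- apply/forallP => v; case: (ornament_of_ornament_at hT (top v)) => _ -> uniq_max /=.
  by apply/forallP => m; apply/implyP => /uniq_max ->.
- by apply/forallP => v; apply/forallP => w; apply: nest.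
Qed.

Section FixedOrnamentation.
Variable d : {ffun V -> {set V}}.
Hypothesis hd : tree_ornamentation d.

Lemma orn_self v : v \in d v.
Proof. by case: (hd.1 v). Qed.

Lemma orn_le_top v x : x \in d v -> le x v.
Proof. by case: (hd.1 v) => _ + _; apply. Qed.

Lemma orn_convex v x y : x \in d v -> le x y -> le y v -> y \in d v.
Proof. by case: (hd.1 v) => _ _; apply. Qed.

Lemma orn_inj : injective d.
Proof.
move=> v w e; apply: (leT_anti hT); apply: orn_le_top.
  by rewrite -e orn_self.
by rewrite e orn_self.
Qed.

Lemma orn_nested v w : [\/ d v \subset d w, d w \subset d v | [disjoint d v & d w]].
Proof. exact/or3P/(hd.2 v w). Qed.

Lemma orn_sub_of_mem v x : x \in d v -> d x \subset d v.
Proof.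
move=> xv; case: (orn_nested x v) => // [vx|/disjointFr/(_ (orn_self x))].
  by rewrite (leT_anti hT (orn_le_top xv) (orn_le_top (subsetP vx v (orn_self v)))).
by rewrite xv.
Qed.

Lemma orn_proper v w : d w \subset d v -> w != v -> d w \proper d v.
Proof. by move=> wv; apply: contraNT; rewrite properEneq wv andbT negbK => /eqP/orn_inj->. Qed.

Lemma mem_reduction v u y : (y \in reduction par d v u) = (y \in d v) && ~~ le y u.
Proof. by rewrite /reduction /Delta !inE andbC; case: (y \in d v). Qed.

Lemma reduction_sub v u : reduction par d v u \subset d v.
Proof. exact: subsetDl. Qed.

Lemma orn_redE u v w :
  orn_red par d u v w = if w == v then reduction par d v u else d w.
Proof. by rewrite ffunE. Qed.

Lemma wrapsP v u : wraps d v u ->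
  [/\ u != v, d u \subset d v & forall w, ~~ ((d u \proper d w) && (d w \proper d v))].
Proof. by case/and3P => ? ? /forallP. Qed.

Lemma wraps_le v u : wraps d v u -> [/\ u \in d v, le u v & ~~ le v u].
Proof.
case/wrapsP => nuv suv _; have uv := subsetP suv u (orn_self u).
split=> //; first exact: orn_le_top.
by apply: contra nuv => vu; rewrite (leT_anti hT (orn_le_top uv) vu).
Qed.

Lemma exists_wraps v x : x \in d v -> x != v -> exists2 w, wraps d v w & x \in d w.
Proof.
move=> xv nxv; pose A := [set w | (x \in d w) && (d w \proper d v)].
have xA : x \in A by rewrite inE orn_self orn_proper // orn_sub_of_mem.
case: (arg_maxnP (fun w => #|d w|) xA) => w wA wmax.
have /andP [xw wv] : (x \in d w) && (d w \proper d v) by have : w \in A by []; rewrite inE.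
exists w => //; apply/and3P; split; [|exact: proper_sub|].
  by apply: contraTneq wv => ->; rewrite properxx.
apply/forallP => z; apply/negP => /andP [wz zv].
have zA : z \in A by rewrite inE zv andbT (subsetP (proper_sub wz)).
by have := wmax z zA; rewrite /= leqNgt (proper_card wz).
Qed.

Lemma reduction_ornament_at v u : ~~ le v u -> ornament_at par (reduction par d v u) v.
Proof.
move=> nvu; split.
- by rewrite mem_reduction orn_self.
- by move=> x; rewrite mem_reduction => /andP [/orn_le_top].
- move=> x y; rewrite !mem_reduction => /andP [xv nxu] xy yv.
  rewrite (orn_convex xv xy yv); apply: contra nxu; exact: leT_trans.
Qed.

Lemma reduction_nested v u w : wraps d v u -> w != v ->
  nested_or_disjoint (reduction par d v u) (d w).
Proof.
move=> wr nwv; have [nuv suv no_between] := wrapsP wr.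
apply/or3P; case: (orn_nested v w) => [vw|wv|disj].
- by apply: Or31; apply: subset_trans vw; apply: reduction_sub.
- case lwu: (le w u).
    apply: Or33; apply/disjointP => y; rewrite mem_reduction => /andP [_].
    by apply: contraNN => yw; apply: leT_trans (orn_le_top yw) lwu.
  apply: Or32; apply/subsetP => y yw; rewrite mem_reduction (subsetP wv _ yw).
  apply/negP => yu; have := leT_total (orn_le_top yw) yu; rewrite lwu /= => uw.
  have uw_mem : u \in d w by apply: orn_convex yw yu uw.
  have nuw : u != w by apply: contraFneq lwu => <-; apply: leTxx.
  by have := no_between w; rewrite (orn_proper wv nwv) (orn_proper (orn_sub_of_mem uw_mem) nuw).
- by apply: Or33; apply: disjointWl disj; apply: reduction_sub.
Qed.

Lemma orn_red_ornamentation v u : wraps d v u -> tree_ornamentation (orn_red par d u v).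
Proof.
move=> wr; have [_ _ nvu] := wraps_le wr.
split=> [w|a b]; rewrite !orn_redE.
  by case: eqP => [->|_]; [apply: reduction_ornament_at | apply: hd.1].
case: (eqVneq a v) => [_|nav]; case: (eqVneq b v) => [_|nbv].
- by rewrite /nested_or_disjoint subxx.
- exact: reduction_nested.
- by rewrite nested_or_disjointC; apply: reduction_nested.
- exact: hd.2.
Qed.

Lemma orn_red_lt v u : wraps d v u -> orn_lt (orn_red par d u v) d.
Proof.
move=> wr; have [uv _ _] := wraps_le wr.
apply/andP; split.
  apply/forallP => w; rewrite orn_redE; case: eqP => [->|_]; [exact: reduction_sub | exact: subxx].
apply/eqP => /ffunP /(_ v); rewrite orn_redE eqxx => e.
by move: uv; rewrite -e mem_reduction leTxx andbF.
Qed.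

Lemma ornament_at_sub_reduction E v x :
  ornament_at par E v -> E \subset d v -> x \in d v -> x \notin E ->
  (forall w, wraps d v w -> nested_or_disjoint E (d w)) ->
  exists2 w, wraps d v w & E \subset reduction par d v w.
Proof.
case=> vE le_v conv sEv xv xE nested.
(* Only [disjoint E & d w] is possible for the wrapped w containing x, and then
   convexity of E up to v keeps E off the down-set of w. *)
have nxv : x != v by apply: contraNneq xE => ->.
have [w wr xw] := exists_wraps xv nxv.
have [_ lwv nvw] := wraps_le wr.
exists w => //; case/or3P: (nested w wr) => [Ew|wE|disj].
- by move: nvw; rewrite orn_le_top // (subsetP Ew).
- by move: xE; rewrite (subsetP wE).
- apply/subsetP => y yE; rewrite mem_reduction (subsetP sEv _ yE).
  apply/negP => yw; have wE := conv y w yE yw lwv.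
  by have := orn_self w; rewrite (disjointFr disj wE).
Qed.

Lemma in_Mset v u : (u \in Mset par d v) =
  wraps d v u && [forall w, wraps d v w ==> ~~ (reduction par d v u \proper reduction par d v w)].
Proof.
rewrite inE /minimal_reduction; case wr: (wraps d v u); last by rewrite andbF.
have [uv _ _] := wraps_le wr; rewrite uv /=.
suff -> : [exists w, wraps d v w && (reduction par d v u == reduction par d v w)] by [].
by apply/existsP; exists u; rewrite wr eqxx.
Qed.

Lemma exists_Mset_sup_reduction v w : wraps d v w ->
  exists2 u, u \in Mset par d v & reduction par d v w \subset reduction par d v u.
Proof.
move=> ww; pose A := [set u | wraps d v u && (reduction par d v w \subset reduction par d v u)].
have wA : w \in A by rewrite inE ww subxx.
case: (arg_maxnP (fun u => #|reduction par d v u|) wA) => u uA umax.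
have /andP [wu sub] : wraps d v u && (reduction par d v w \subset reduction par d v u).
  by have : u \in A by []; rewrite inE.
exists u => //; rewrite in_Mset wu; apply/forallP => u'; apply/implyP => wu'.
apply/negP => pr; have u'A : u' \in A by rewrite inE wu' (subset_trans sub (proper_sub pr)).
by have := umax u' u'A; rewrite /= leqNgt (proper_card pr).
Qed.

Lemma covby_orn_red v u : u \in Mset par d v -> covby root par (orn_red par d u v) d.
Proof.
rewrite in_Mset => /andP [wr /forallP minred].
set d' := orn_red par d u v.
have d'_off w : w != v -> d' w = d w by move=> nwv; rewrite orn_redE (negbTE nwv).
have d'v : d' v = reduction par d v u by rewrite orn_redE eqxx.
apply/and4P; split; first exact/ornamentationP/orn_red_ornamentation.
- exact/ornamentationP.
- exact: orn_red_lt.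
apply/forallP => e; apply/implyP => /ornamentationP he.
apply/negP => /andP [/andP [d'e nd'e] /andP [ed ned]].
have e_off := orn_le_eq_off d'e ed d'_off.
have sev : e v \subset d v := forallP ed v.
have [x xv xe] : exists2 x, x \in d v & x \notin e v.
  apply/subsetPn; apply: contra ned => dve; apply/eqP/(ffun_eq_off e_off)/eqP.
  by rewrite eqEsubset sev.
have proper_d'e : d' v \proper e v.
  rewrite properEneq (forallP d'e v) andbT; apply: contra nd'e => /eqP d'ev.
  by apply/eqP/(ffun_eq_off _ d'ev) => w nwv; rewrite d'_off ?e_off.
have nested w : wraps d v w -> nested_or_disjoint (e v) (d w).
  by move=> ww; have [nwv _ _] := wrapsP ww; rewrite -e_off //; apply: he.2.
have [w ww sw] := ornament_at_sub_reduction (he.1 v) sev xv xe nested.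
by have /negP := implyP (minred w) ww; apply; rewrite -d'v (proper_sub_trans proper_d'e sw).
Qed.

Lemma covby_orn_red_inv d' : covby root par d' d ->
  exists v u, u \in Mset par d v /\ d' = orn_red par d u v.
Proof.
case/and4P => /ornamentationP hd' _ /andP [d'd nd'd] /forallP no_between.
pose S := [set w | d' w != d w].
have [w0 w0S] : exists w0, w0 \in S.
  apply/existsP; apply: contraR nd'd => /existsPn eq_all.
  by apply/eqP/ffunP => w; have := eq_all w; rewrite inE negbK => /eqP.
case: (arg_minnP (fun w => #|d w|) w0S) => v vS vmin.
have : v \in S by [].
rewrite inE => nv.
have sd'v : d' v \subset d v := forallP d'd v.
have [x xv xd'] : exists2 x, x \in d v & x \notin d' v.
  by apply/subsetPn; apply: contra nv => dv; rewrite eqEsubset sd'v.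
have nested w : wraps d v w -> nested_or_disjoint (d' v) (d w).
  move=> ww; have [nwv swv _] := wrapsP ww.
  suff <- : d' w = d w by apply: hd'.2.
  apply/eqP; apply: contraT => nw; have wS : w \in S by rewrite inE.
  by have := vmin w wS; rewrite /= leqNgt (proper_card (orn_proper swv nwv)).
have [w ww sw] := ornament_at_sub_reduction (hd'.1 v) sd'v xv xd' nested.
have [u uM su] := exists_Mset_sup_reduction ww.
exists v, u; split => //; have wu : wraps d v u by move: uM; rewrite in_Mset => /andP [].
apply/eqP; apply: contraT => ne.
have /ornamentationP he := orn_red_ornamentation wu.
have := implyP (no_between (orn_red par d u v)) he; rewrite orn_red_lt // andbT.
rewrite /orn_lt ne andbT => /negP le_fails; exfalso; apply: le_fails; apply/forallP => w'.
rewrite orn_redE; case: eqP => [->|_]; [exact: subset_trans sw su | exact: forallP d'd w'].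
Qed.

Lemma mem_Pop v y : (y \in Pop root par d v) =
  (y \in d v) && [forall u in Mset par d v, y \in reduction par d v u].
Proof.
rewrite /Pop in_setI; case yv: (y \in d v) => //=.
apply/bigcapP/forall_inP => [cov u uM|red _ /covby_orn_red_inv [v' [u [uM ->]]]].
  by have := cov _ (covby_orn_red uM); rewrite orn_redE eqxx.
by rewrite orn_redE; case: eqP => [ev|_ //]; move: uM; rewrite -ev; apply: red.
Qed.

Lemma Pop_Mset v : Pop root par d v =
  if Mset par d v == set0 then d v else \bigcap_(u in Mset par d v) orn_red par d u v v.
Proof.
apply/setP => y; rewrite mem_Pop; case: eqP => [->|/eqP/set0Pn [u0 u0M]].
  by apply/andP/idP => [[]//|yv]; split=> //; apply/forall_inP => u; rewrite inE.
apply/andP/bigcapP => [[_ /forall_inP red] u uM|red]; first by rewrite orn_redE eqxx red.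
have red_v u : u \in Mset par d v -> y \in reduction par d v u.
  by move=> uM; have := red u uM; rewrite orn_redE eqxx.
split; first exact: subsetP (reduction_sub v u0) y (red_v u0 u0M).
exact/forall_inP.
Qed.

End FixedOrnamentation.
End Ornamentations.

Theorem lemma2p4 (V : finType) (root : V) (par : V -> V)
  (hT : rooted_tree root par) (d : {ffun V -> {set V}})
  (hd : ornamentation root par d) :
  (forall v u, u \in Mset par d v -> covby root par (orn_red par d u v) d) /\
  (forall d', covby root par d' d ->
     exists v u, u \in Mset par d v /\ d' = orn_red par d u v) /\
  (forall v, Pop root par d v =
     if Mset par d v == set0 then d v
     else \bigcap_(u in Mset par d v) orn_red par d u v v).
Proof.
have hdT := (ornamentationP hT d).1 hd.
split; first exact: covby_orn_red.
split; first exact: covby_orn_red_inv.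
exact: Pop_Mset.
Qed.
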